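(* Let $\mathbb{F}_2$ be the free group on generators $a,b$, let $\ell\colon \mathbb{F}_2\to\mathbb{N}$ be the word length with respect to $\{a,a^{-1},b,b^{-1}\}$, let $\gamma_n(\mathbb{F}_2)$ denote the $n$-th term of the lower central series ($\gamma_1(\mathbb{F}_2)=\mathbb{F}_2$, $\gamma_{n+1}(\mathbb{F}_2)=[\gamma_n(\mathbb{F}_2),\mathbb{F}_2]$), and set $\alpha(n):=\min\{\ell(w)\mid w\in\gamma_n(\mathbb{F}_2)\setminus\{e\}\}$ and $\alpha:=\lim_{n\to\infty}\frac{\log_2(\alpha(n))}{\log_2(n)}$. Then $$\alpha\le \log_{\varphi}(2)=1.440\ldots,$$ where $\varphi=\frac{1+\sqrt5}{2}$ is the golden ratio; equivalently, $\alpha(n)\preceq n^{\log_\varphi(2)+\varepsilon}$ for all $\varepsilon>0$.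
   Context: The limit defining $\alpha$ is known to exist. For functions $f,g\colon\mathbb{N}\to\mathbb{R}$, $f(n)\preceq g(n)$ means there is a constant $C$ such that $f(n)\le C\,g(Cn)$ for all $n\in\mathbb{N}$. *)

From HB Require Import structures.
From mathcomp Require Import all_boot all_order all_algebra.
From mathcomp Require Import all_classical all_reals all_analysis.
Set Implicit Arguments. Unset Strict Implicit. Unset Printing Implicit Defensive.
Import Order.TTheory GRing.Theory Num.Theory.

(* The free group F_2 on generators a, b, modelled as freely reduced words. *)
(* A letter is (g, s): g = false for a, true for b; s = true for an inverse. *)
Definition letter := (bool * bool)%type.
Definition word := seq letter.

Definition linv (x : letter) : letter := (x.1, ~~ x.2).

Definition reduce_cons (x : letter) (w : word) : word :=
  match w with
  | y :: w' => if y == linv x then w' else x :: w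
  | [::] => [:: x]
  end.

Definition reduce (w : word) : word := foldr reduce_cons [::] w.

Definition reduced (w : word) : Prop := reduce w = w.

Definition fmul (u v : word) : word := reduce (u ++ v).
Definition finv (w : word) : word := rev (map linv w).
Definition fcomm (x y : word) : word := fmul (fmul (finv x) (finv y)) (fmul x y).

Definition wlen (w : word) : nat := size w.

Inductive gen (S : word -> Prop) : word -> Prop :=
  | gen_one : gen S [::]
  | gen_in x : S x -> gen S x
  | gen_inv x : gen S x -> gen S (finv x)
  | gen_mul x y : gen S x -> gen S y -> gen S (fmul x y).

(* lcs k = gamma_{k+1}(F_2) *)
Fixpoint lcs (k : nat) : word -> Prop :=
  match k with
  | 0 => reduced
  | k'.+1 => gen (fun c => exists x y, lcs k' x /\ reduced y /\ c = fcomm x y)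
  end.

(* gamma_n(F_2), n >= 1 (gamma_0 is set to gamma_1 by convention) *)
Definition gamma (n : nat) : word -> Prop := lcs n.-1.

(* alpha(n) = min { l(w) | w in gamma_n(F_2) \ {e} } (0 if the set were empty) *)
Definition alpha_pred (n : nat) : pred nat :=
  fun k => `[< exists w, gamma n w /\ w <> [::] /\ wlen w = k >].

Definition alpha (n : nat) : nat :=
  match pselect (exists k, alpha_pred n k) with
  | left h => ex_minn h
  | right _ => 0%N
  end.

Local Open Scope ring_scope.

Definition log2 {R : realType} (x : R) : R := ln x / ln 2.

Definition golden_ratio {R : realType} : R := (1 + Num.sqrt 5) / 2.

From Pilot Require Import Defs.
From HB Require Import structures.
From mathcomp Require Import all_boot all_order all_algebra.
From mathcomp Require Import all_classical all_reals all_analysis.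
From mathcomp Require Import zify ring lra.
Import Order.TTheory GRing.Theory Num.Theory numFieldNormedType.Exports.
(* Re-imported so that [finv] denotes the inverse in F_2, not fingraph's [finv]. *)
Import Defs.
Set Implicit Arguments. Unset Strict Implicit. Unset Printing Implicit Defensive.

(* Let F_k be the Fibonacci numbers. The commutators u_0 = a, u_1 = b a^-1,
   u_(k+2) = [u_(k+1), u_k] satisfy u_k \in gamma_(F_(k+1)), because
   [gamma_m, gamma_n] <= gamma_(m+n). The endomorphism tau of F_2 given by
   a |-> a^-1 b a b^-1, b |-> a b^-1 a^-1 b sends u_k to a conjugate of
   u_(k+2), and no cancellation occurs when it is applied to a reduced word,
   so it multiplies lengths by exactly 4. Hence tau^j(u_1) is a nontrivial
   element of gamma_(F_(2j+2)) of length 2 * 4^j, i.e. alpha(F_(2j+2)) <= 2^(2j+1),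
   while F_(2j+2) >= phi^(2j). Along this subsequence log alpha(n) / log n is
   at most (1 + 1/(2j)) log_phi 2, which bounds the limit. *)

(** * Free reduction *)

Lemma linvK : involutive linv.
Proof. by case=> g s; rewrite /linv /= negbK. Qed.

Fixpoint reducedb (w : word) : bool :=
  match w with
  | x :: ((y :: _) as w') => (y != linv x) && reducedb w'
  | _ => true
  end.

Lemma reducedb_behead x w : reducedb (x :: w) -> reducedb w.
Proof. by case: w => //= y w /andP[]. Qed.

Lemma reducedb_reduce_cons x w : reducedb w -> reducedb (reduce_cons x w).
Proof.
case: w => [|y w] //= w_red; case: ifP => [_|/negbT y_x].
  exact: reducedb_behead w_red.
by rewrite /= y_x w_red.
Qed.

Lemma reducedb_reduce w : reducedb (reduce w).
Proof. by elim: w => //= x w; apply: reducedb_reduce_cons. Qed.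

Lemma reduce_id w : reducedb w -> reduce w = w.
Proof.
elim: w => //= x w IHw xw_red; rewrite IHw; last exact: reducedb_behead xw_red.
by case: w xw_red {IHw} => //= y w /andP[/negbTE ->].
Qed.

Lemma reducedP w : reflect (reduced w) (reducedb w).
Proof. by apply: (iffP idP) => [/reduce_id | <-] //; apply: reducedb_reduce. Qed.

Lemma reduce_idem w : reduce (reduce w) = reduce w.
Proof. exact/reduce_id/reducedb_reduce. Qed.

Lemma reduce_consVK x w : reducedb w -> reduce_cons x (reduce_cons (linv x) w) = w.
Proof.
case: w => [|y w] /=; first by rewrite eqxx.
case: ifP => [/eqP|_ _]; last by rewrite /= eqxx.
rewrite linvK => -> {y}.
by case: w => //= z w /andP[/negbTE ->].
Qed.

Lemma reducedb_foldr t u : reducedb t -> reducedb (foldr reduce_cons t u).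
Proof. by move=> t_red; elim: u => //= x u; apply: reducedb_reduce_cons. Qed.

Lemma foldr_reduce_cons t x w : reducedb t ->
  foldr reduce_cons t (reduce_cons x w) = reduce_cons x (foldr reduce_cons t w).
Proof.
move=> t_red; case: w => [|y w] //=; case: ifP => [/eqP ->|] //=.
by rewrite reduce_consVK // reducedb_foldr.
Qed.

Lemma foldr_reduce t u : reducedb t ->
  foldr reduce_cons t (reduce u) = foldr reduce_cons t u.
Proof. by move=> t_red; elim: u => //= x u IHu; rewrite foldr_reduce_cons // IHu. Qed.

Lemma reduce_cat u v : reduce (u ++ v) = foldr reduce_cons (reduce v) u.
Proof. by rewrite /reduce foldr_cat. Qed.

Lemma reduce_catl u v : reduce (reduce u ++ v) = reduce (u ++ v).
Proof. by rewrite !reduce_cat foldr_reduce // reducedb_reduce. Qed.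

Lemma reduce_catr u v : reduce (u ++ reduce v) = reduce (u ++ v).
Proof. by rewrite !reduce_cat reduce_idem. Qed.

Lemma finv_cat u v : finv (u ++ v) = finv v ++ finv u.
Proof. by rewrite /finv map_cat rev_cat. Qed.

Lemma finv_cons x u : finv (x :: u) = finv u ++ [:: linv x].
Proof. by rewrite -cat1s finv_cat. Qed.

Lemma finvK : involutive finv.
Proof. by move=> u; rewrite /finv map_rev revK -map_comp (eq_map linvK) map_id. Qed.

Lemma foldr_finv t u : reducedb t ->
  foldr reduce_cons (foldr reduce_cons t u) (finv u) = t.
Proof.
move=> t_red; elim: u => //= x u IHu; rewrite finv_cons foldr_cat /=.
by have := reduce_consVK (linv x) (reducedb_foldr u t_red); rewrite linvK => ->.
Qed.

Lemma reduce_catVK u v : reduce (finv u ++ u ++ v) = reduce v.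
Proof. by rewrite catA reduce_cat foldr_cat foldr_finv // reducedb_reduce. Qed.

Lemma reduce_catKV u v : reduce (u ++ finv u ++ v) = reduce v.
Proof. by rewrite -{1}(finvK u) reduce_catVK. Qed.

Definition reduced_junction (s t : word) : bool :=
  match s, t with
  | x :: s', y :: _ => y != linv (last x s')
  | _, _ => true
  end.

Lemma reducedb_cat s t :
  reducedb (s ++ t) = [&& reducedb s, reducedb t & reduced_junction s t].
Proof.
elim: s => [|x s IHs]; first by rewrite /= andbT.
case: s IHs => [|y s] IHs; first by clear IHs; case: t => [|z t] //=; rewrite andbC.
have -> : reducedb ((x :: y :: s) ++ t) = (y != linv x) && reducedb ((y :: s) ++ t) by [].
by rewrite IHs /= -!andbA.
Qed.

Lemma reduced_junction_finvl x w y t :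
  reduced_junction (finv (x :: w)) (y :: t) = (y != x).
Proof. by rewrite finv_cons; case: (finv w) => [|z s] /=; rewrite ?last_cat linvK. Qed.

Lemma reducedb_finv w : reducedb (finv w) = reducedb w.
Proof.
elim: w => [|x [|y w] IHw] //.
rewrite finv_cons reducedb_cat IHw reduced_junction_finvl -[reducedb [:: _]]/true.
by rewrite andTb andbC eq_sym.
Qed.

Lemma finv_reduce w : finv (reduce w) = reduce (finv w).
Proof.
have w_finv : reduce (w ++ finv (reduce w)) = [::].
  by rewrite -reduce_catl -[_ ++ finv _]cats0 -catA reduce_catKV.
have reduce_finv : reduce (finv (reduce w)) = reduce (finv w).
  by rewrite -(reduce_catVK w) -reduce_catr w_finv cats0.
by rewrite -reduce_finv [RHS]reduce_id // reducedb_finv reducedb_reduce.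
Qed.

(** * Substitution homomorphisms *)

(* Words over an arbitrary alphabet [T] of generators: [T = bool] gives the
   endomorphisms of F_2, [T = nat] the formal words used to check identities. *)
Section Substitution.
Variable T : eqType.
Implicit Types (p : T * bool) (s : seq (T * bool)).

Definition sinv p : T * bool := (p.1, ~~ p.2).
Definition sinvs s := rev (map sinv s).

Definition sreduce_cons p s :=
  match s with
  | q :: s' => if q == sinv p then s' else p :: s
  | [::] => [:: p]
  end.

Definition sreduce s := foldr sreduce_cons [::] s.

Variable f : T -> word.

Definition subst_letter p : word := if p.2 then finv (f p.1) else f p.1.
Definition subst s : word := reduce (flatten (map subst_letter s)).

Lemma subst_cons p s : subst (p :: s) = reduce (subst_letter p ++ subst s).
Proof. by rewrite /subst reduce_catr. Qed.

Lemma subst_letter_sinv p : subst_letter (sinv p) = finv (subst_letter p).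
Proof. by case: p => i []; rewrite /subst_letter /= ?finvK. Qed.

Lemma subst_sreduce_cons p s : subst (sreduce_cons p s) = subst (p :: s).
Proof.
case: s => //= q s; case: ifP => [/eqP ->|] //.
by rewrite /subst /= subst_letter_sinv reduce_catKV.
Qed.

Lemma subst_sreduce s : subst (sreduce s) = subst s.
Proof. by elim: s => //= p s IHs; rewrite subst_sreduce_cons !subst_cons IHs. Qed.

Lemma subst_cat s t : subst (s ++ t) = fmul (subst s) (subst t).
Proof. by rewrite /fmul /subst reduce_catl reduce_catr map_cat flatten_cat. Qed.

Lemma subst_sinvs s : subst (sinvs s) = finv (subst s).
Proof.
rewrite /subst finv_reduce; congr (reduce _); elim: s => //= p s IHs.
by rewrite /sinvs map_cons rev_cons map_rcons -cats1 flatten_cat -/(sinvs s) IHs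
  /= cats0 subst_letter_sinv finv_cat.
Qed.

End Substitution.

Lemma reduceE : reduce =1 @sreduce bool.
Proof. by []. Qed.

Lemma finvE : finv =1 @sinvs bool.
Proof. by []. Qed.

(** * Group identities *)

(* An identity between group terms holds in F_2 as soon as the two terms
   freely reduce to the same formal word ([ginterp_eq]). *)
Inductive gterm :=
  | GVar of nat
  | GOne
  | GMul of gterm & gterm
  | GInv of gterm
  | GComm of gterm & gterm.

Definition GConj e h := GMul (GMul (GInv h) e) h.

Fixpoint ginterp (env : seq word) (e : gterm) : word :=
  match e with
  | GVar i => nth [::] env i
  | GOne => [::]
  | GMul e1 e2 => fmul (ginterp env e1) (ginterp env e2)
  | GInv e1 => finv (ginterp env e1)
  | GComm e1 e2 => fcomm (ginterp env e1) (ginterp env e2)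
  end.

Fixpoint gword (e : gterm) : seq (nat * bool) :=
  match e with
  | GVar i => [:: (i, false)]
  | GOne => [::]
  | GMul e1 e2 => gword e1 ++ gword e2
  | GInv e1 => sinvs (gword e1)
  | GComm e1 e2 => (sinvs (gword e1) ++ sinvs (gword e2)) ++ (gword e1 ++ gword e2)
  end.

Lemma ginterp_subst env e :
  all reducedb env -> ginterp env e = subst (nth [::] env) (gword e).
Proof.
move=> env_red; elim: e => [i||e1 IH1 e2 IH2|e IH|e1 IH1 e2 IH2] //=.
- rewrite /subst /subst_letter /= cats0 reduce_id //.
  by have [/(mem_nth [::])/(allP env_red)|/(nth_default [::]) ->] := ltnP i (size env).
- by rewrite subst_cat IH1 IH2.
- by rewrite subst_sinvs IH.
- by rewrite /fcomm !subst_cat !subst_sinvs IH1 IH2.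
Qed.

Lemma ginterp_eq env e1 e2 : all reducedb env ->
  sreduce (gword e1) = sreduce (gword e2) -> ginterp env e1 = ginterp env e2.
Proof.
by move=> env_red e12; rewrite !ginterp_subst // -subst_sreduce e12 subst_sreduce.
Qed.

Ltac group_identity env e1 e2 :=
  apply: (@ginterp_eq env e1 e2);
  [rewrite /= ?andbT; repeat (apply/andP; split); apply/reducedP; assumption | by []].

Definition fconj (x h : word) : word := fmul (fmul (finv h) x) h.

Section GroupIdentities.
Variables x y z h : word.
Hypotheses (x_red : reduced x) (y_red : reduced y).
Hypotheses (z_red : reduced z) (h_red : reduced h).

Lemma fconj1 : fconj [::] h = [::].
Proof. by group_identity [:: h] (GConj GOne (GVar 0)) GOne. Qed.

Lemma fconj_fcomm : fconj (fcomm x y) h = fcomm (fconj x h) (fconj y h).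
Proof.
by group_identity [:: x; y; h] (GConj (GComm (GVar 0) (GVar 1)) (GVar 2))
  (GComm (GConj (GVar 0) (GVar 2)) (GConj (GVar 1) (GVar 2))).
Qed.

Lemma fconj_finv : fconj (finv x) h = finv (fconj x h).
Proof.
by group_identity [:: x; h] (GConj (GInv (GVar 0)) (GVar 1))
  (GInv (GConj (GVar 0) (GVar 1))).
Qed.

Lemma fconj_fmul : fconj (fmul x y) h = fmul (fconj x h) (fconj y h).
Proof.
by group_identity [:: x; y; h] (GConj (GMul (GVar 0) (GVar 1)) (GVar 2))
  (GMul (GConj (GVar 0) (GVar 2)) (GConj (GVar 1) (GVar 2))).
Qed.

Lemma fcommx1 : fcomm x [::] = [::].
Proof. by group_identity [:: x] (GComm (GVar 0) GOne) GOne. Qed.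

Lemma fcomm_finv : fcomm x (finv y) = fconj (finv (fcomm x y)) (finv y).
Proof.
by group_identity [:: x; y] (GComm (GVar 0) (GInv (GVar 1)))
  (GConj (GInv (GComm (GVar 0) (GVar 1))) (GInv (GVar 1))).
Qed.

Lemma fcomm_fmul : fcomm x (fmul y z) = fmul (fcomm x z) (fconj (fcomm x y) z).
Proof.
by group_identity [:: x; y; z] (GComm (GVar 0) (GMul (GVar 1) (GVar 2)))
  (GMul (GComm (GVar 0) (GVar 2)) (GConj (GComm (GVar 0) (GVar 1)) (GVar 2))).
Qed.

(* A form of the Hall--Witt identity. *)
Lemma fcomm_fcomm : fcomm x (fcomm y z) =
  fconj (fmul (fconj (fcomm (finv (fcomm (finv x) (finv z))) y) x)
              (fconj (fcomm (fcomm x (finv y)) (finv z)) y)) z.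
Proof.
by group_identity [:: x; y; z] (GComm (GVar 0) (GComm (GVar 1) (GVar 2)))
  (GConj (GMul (GConj (GComm (GInv (GComm (GInv (GVar 0)) (GInv (GVar 2)))) (GVar 1))
                      (GVar 0))
               (GConj (GComm (GComm (GVar 0) (GInv (GVar 1))) (GInv (GVar 2))) (GVar 1)))
         (GVar 2)).
Qed.

End GroupIdentities.

(** * The lower central series *)

Lemma reduced_fmul x y : reduced (fmul x y).
Proof. exact: reduce_idem. Qed.

Lemma reduced_finv x : reduced x -> reduced (finv x).
Proof. by rewrite /reduced -finv_reduce => ->. Qed.

Lemma lcs_one k : lcs k [::].
Proof. by case: k => //= k; apply: gen_one. Qed.

Lemma lcsS_ind k (P : word -> Prop) :
  P [::] ->
  (forall x y, lcs k x -> reduced y -> P (fcomm x y)) ->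
  (forall x, lcs k.+1 x -> P x -> P (finv x)) ->
  (forall x y, lcs k.+1 x -> lcs k.+1 y -> P x -> P y -> P (fmul x y)) ->
  forall x, lcs k.+1 x -> P x.
Proof.
move=> P1 Pcomm Pinv Pmul x /=.
elim=> [|_ [u [v [u_lcs [v_red ->]]]]|y|y z y_lcs Py z_lcs Pz] //.
- exact: Pcomm.
- exact: Pinv.
- exact: Pmul.
Qed.

Lemma lcs_reduced k x : lcs k x -> reduced x.
Proof.
case: k => // k; apply: lcsS_ind => // [x' y _ _ | x' _ | x' y _ _ _ _].
- exact: reduced_fmul.
- exact: reduced_finv.
- exact: reduced_fmul.
Qed.

Lemma lcs_finv k x : lcs k x -> lcs k (finv x).
Proof. by case: k => [|k] /=; [apply: reduced_finv | apply: gen_inv]. Qed.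

Lemma lcs_fmul k x y : lcs k x -> lcs k y -> lcs k (fmul x y).
Proof. by case: k => [_ _|k /=]; [apply: reduced_fmul | apply: gen_mul]. Qed.

Lemma lcs_fcomm_reduced k x y : lcs k x -> reduced y -> lcs k.+1 (fcomm x y).
Proof. by move=> x_lcs y_red; apply: gen_in; exists x, y. Qed.

Lemma lcs_fconj k x h : reduced h -> lcs k x -> lcs k (fconj x h).
Proof.
move=> h_red; elim: k x => [|k IHk] x; first by move=> _; apply: reduced_fmul.
move: x; apply: lcsS_ind.
- by rewrite fconj1 //; apply: lcs_one.
- move=> x y x_lcs y_red; rewrite (fconj_fcomm (lcs_reduced x_lcs) y_red h_red).
  by apply: lcs_fcomm_reduced; [apply: IHk | apply: reduced_fmul].
- move=> x x_lcs IHx; rewrite (fconj_finv (lcs_reduced x_lcs) h_red).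
  exact: lcs_finv.
- move=> x y x_lcs y_lcs IHx IHy.
  rewrite (fconj_fmul (lcs_reduced x_lcs) (lcs_reduced y_lcs) h_red).
  exact: lcs_fmul.
Qed.

Lemma lcs_fcomm i j x y : lcs i x -> lcs j y -> lcs (i + j).+1 (fcomm x y).
Proof.
elim: j i x y => [|j IHj] i x y x_lcs.
  by rewrite addn0 => /lcs_reduced; apply: lcs_fcomm_reduced.
have x_red := lcs_reduced x_lcs; move: y; apply: lcsS_ind.
- by rewrite fcommx1 //; apply: lcs_one.
- move=> u v u_lcs v_red; have u_red := lcs_reduced u_lcs.
  rewrite (fcomm_fcomm x_red u_red v_red).
  apply: (lcs_fconj v_red); apply: lcs_fmul.
  + apply: (lcs_fconj x_red); rewrite addnS -addSn; apply: IHj; last exact: u_lcs.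
    by apply: lcs_finv; apply: lcs_fcomm_reduced; [apply: lcs_finv | apply: reduced_finv].
  + apply: (lcs_fconj u_red); rewrite addnS.
    apply: (lcs_fcomm_reduced _ (reduced_finv v_red)).
    by apply: IHj; last apply: lcs_finv.
- move=> y y_lcs IHy; have y_red := lcs_reduced y_lcs.
  rewrite (fcomm_finv x_red y_red).
  exact/(lcs_fconj (reduced_finv y_red))/lcs_finv.
- move=> y z y_lcs z_lcs IHy IHz; have z_red := lcs_reduced z_lcs.
  rewrite (fcomm_fmul x_red (lcs_reduced y_lcs) z_red).
  exact/lcs_fmul/(lcs_fconj z_red).
Qed.

Lemma gamma_fcomm m n x y : 0 < m -> 0 < n ->
  gamma m x -> gamma n y -> gamma (m + n) (fcomm x y).
Proof.
by case: m => // m; case: n => // n _ _; rewrite /gamma addSn addnS; apply: lcs_fcomm.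
Qed.

(** * Fibonacci commutators *)

Lemma nat_ind2 (P : nat -> Prop) :
  P 0 -> P 1 -> (forall n, P n -> P n.+1 -> P n.+2) -> forall n, P n.
Proof.
move=> P0 P1 PS n; suff: P n /\ P n.+1 by case.
by elim: n => [|n [Pn PSn]]; split => //; apply: PS.
Qed.

Fixpoint fib (n : nat) : nat :=
  match n with
  | 0 => 0
  | 1 => 1
  | (m.+1 as n1).+1 => fib n1 + fib m
  end.

Lemma fibSS n : fib n.+2 = fib n.+1 + fib n.
Proof. by []. Qed.

Lemma fib_gt0 n : 0 < fib n.+1.
Proof. by elim/nat_ind2: n => // n _ Sn_gt0; rewrite fibSS ltn_addr. Qed.

Lemma leq_fib n : n <= fib n.+1.
Proof.
elim/nat_ind2: n => // n le_n le_Sn; rewrite fibSS.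
by case: n le_n le_Sn => // n le_n le_Sn; rewrite fibSS in le_Sn *; lia.
Qed.

Fixpoint fibw (k : nat) : word :=
  match k with
  | 0 => [:: (false, false)]
  | 1 => [:: (true, false); (false, true)]
  | (l.+1 as k1).+1 => fcomm (fibw k1) (fibw l)
  end.

Lemma fibwSS k : fibw k.+2 = fcomm (fibw k.+1) (fibw k).
Proof. by []. Qed.

Lemma fibw_reduced k : reduced (fibw k).
Proof. by case: k => [|[|k]] //; apply: reduced_fmul. Qed.

Lemma fibw_gamma k : gamma (fib k.+1) (fibw k).
Proof.
elim/nat_ind2: k => // k IHk IHSk.
by rewrite fibSS fibwSS; apply: gamma_fcomm; rewrite ?fib_gt0.
Qed.

Definition tau_gen (g : bool) : word :=
  if g then [:: (false, false); (true, true); (false, true); (true, false)]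
  else [:: (false, true); (true, false); (false, false); (true, true)].

Definition tau : word -> word := subst tau_gen.

Lemma tau_fmul u v : tau (fmul u v) = fmul (tau u) (tau v).
Proof. by rewrite /tau /fmul reduceE subst_sreduce subst_cat. Qed.

Lemma tau_finv u : tau (finv u) = finv (tau u).
Proof. by rewrite /tau finvE subst_sinvs. Qed.

Lemma tau_fcomm x y : tau (fcomm x y) = fcomm (tau x) (tau y).
Proof. by rewrite /fcomm !tau_fmul !tau_finv. Qed.

Lemma tau_fconj x h : tau (fconj x h) = fconj (tau x) (tau h).
Proof. by rewrite /fconj !tau_fmul !tau_finv. Qed.

Lemma reduced_iter_tau j w : reduced w -> reduced (iter j tau w).
Proof. by case: j => // j _; apply: reduce_idem. Qed.

Lemma iter_tau_fconj j x h :
  iter j tau (fconj x h) = fconj (iter j tau x) (iter j tau h).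
Proof. by elim: j => //= j ->; rewrite tau_fconj. Qed.

Lemma tau_fibw k : tau (fibw k) = fconj (fibw k.+2) [:: (true, true); (false, false)].
Proof.
elim/nat_ind2: k => [||k IHk IHSk]; try by vm_compute.
by rewrite fibwSS tau_fcomm IHk IHSk -fconj_fcomm //; apply: fibw_reduced.
Qed.

Lemma iter_tau_gamma j k : gamma (fib (k + 2 * j).+1) (iter j tau (fibw k)).
Proof.
elim: j k => [|j IHj] k; first by rewrite addn0; apply: fibw_gamma.
rewrite iterSr tau_fibw iter_tau_fconj mulnS addnA addn2.
by apply: lcs_fconj; [apply: reduced_iter_tau | apply: IHj].
Qed.

Lemma reducedb_flatten_tau w :
  reducedb w -> reducedb (flatten (map (subst_letter tau_gen) w)).
Proof.
elim: w => [|x w IHw] // xw_red.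
rewrite /= reducedb_cat IHw ?(reducedb_behead xw_red) //=.
case: w xw_red {IHw} => [|y w] /=; first by case: x => [[] []].
by case/andP; case: x => [[] []]; case: y => [[] []].
Qed.

Lemma size_tau w : reducedb w -> size (tau w) = 4 * size w.
Proof.
move=> w_red; rewrite /tau /subst reduce_id ?reducedb_flatten_tau //.
by elim: w {w_red} => //= x w IHw; rewrite size_cat IHw mulnS; case: x => [[] []].
Qed.

Lemma size_iter_tau j w : reduced w -> size (iter j tau w) = 4 ^ j * size w.
Proof.
move=> w_red; elim: j => [|j IHj]; first by rewrite mul1n.
by rewrite iterS size_tau ?IHj ?expnS ?mulnA //; apply/reducedP/reduced_iter_tau.
Qed.

Lemma alpha_le n w : gamma n w -> w <> [::] -> 0 < alpha n <= wlen w.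
Proof.
move=> w_gamma w_nil; have alpha_w : alpha_pred n (wlen w) by apply/asboolP; exists w.
rewrite /alpha; case: pselect => [ex|]; last by case; exists (wlen w).
case: ex_minnP => m /asboolP[v [_ [v_nil <-]]] min_v.
by rewrite min_v // andbT /wlen lt0n size_eq0; apply/eqP.
Qed.

Lemma alpha_fib_le j : 0 < alpha (fib (2 * j).+2) <= 2 ^ (2 * j).+1.
Proof.
have size_w : size (iter j tau (fibw 1)) = 2 ^ (2 * j).+1.
  by rewrite size_iter_tau // expnS expnM mulnC.
rewrite -size_w; apply: alpha_le; first by have := iter_tau_gamma j 1; rewrite add1n.
by move/(congr1 size)/eqP; rewrite size_w expn_eq0.
Qed.

Local Open Scope classical_set_scope.
Local Open Scope ring_scope.

Section RealBounds.
Variable R : realType.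

Lemma cvg_le_subseq (u : R^nat) (n : nat -> nat) (a c d : R) :
  u @ \oo --> a -> n @ \oo --> \oo ->
  (forall j, u (n j) <= c + d * j.+1%:R^-1) -> a <= c.
Proof.
move=> u_a n_oo u_le.
have bound_c : (fun j => c + d * harmonic j) @ \oo --> c.
  rewrite -[X in _ --> X]addr0 -(mulr0 d).
  by apply: cvgD; [exact: cvg_cst | apply: cvgM; [exact: cvg_cst | exact: cvg_harmonic]].
by apply: (ler_cvg_to (cvg_comp _ _ n_oo u_a) bound_c); apply: nearW.
Qed.

Lemma golden_ratio_gt1 : 1 < golden_ratio :> R.
Proof.
have : 1 < Num.sqrt (5 : R) by rewrite -{1}sqrtr1 ltr_sqrt; lra.
by rewrite /golden_ratio ltr_pdivlMr //; lra.
Qed.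

Lemma golden_ratio_sqr : golden_ratio ^+ 2 = golden_ratio + 1 :> R.
Proof. by rewrite /golden_ratio expr_div_n sqrrD sqr_sqrtr // expr1n; field. Qed.

Lemma golden_ratio_le_fib k : golden_ratio ^+ k <= (fib k.+2)%:R :> R.
Proof.
elim/nat_ind2: k => [||k IHk IHSk]; first by rewrite expr0.
  have : Num.sqrt (5 : R) <= 3.
    have := @sqr_sqrtr R 5 (ler0n _ _); have := @sqrtr_ge0 R 5; rewrite expr2; nra.
  by rewrite expr1 /golden_ratio ler_pdivrMr //=; lra.
have -> : golden_ratio ^+ k.+2 = golden_ratio ^+ k.+1 + golden_ratio ^+ k :> R.
  by rewrite !exprS mulrA -expr2 golden_ratio_sqr mulrDl mul1r.
by rewrite fibSS natrD; apply: lerD.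
Qed.

Lemma log2_exprn (x : R) m : 0 < x -> log2 (x ^+ m) = m%:R * log2 x.
Proof. by move=> x_gt0; rewrite /log2 lnXn // -[ln x *+ m]mulr_natl mulrA. Qed.

Lemma log2_2 : log2 (2 : R) = 1.
Proof. by rewrite /log2 divff // gt_eqF // ln_gt0 // ltr1n. Qed.

Lemma ler_log2 (x y : R) : 0 < x -> x <= y -> log2 x <= log2 y.
Proof.
move=> x_gt0 le_xy; rewrite ler_pM2r ?invr_gt0 ?ln_gt0 ?ltr1n //.
by rewrite ler_ln ?posrE // (lt_le_trans x_gt0).
Qed.

Lemma ratio_fib_le j :
  log2 (alpha (fib (2 * j.+1).+2))%:R / log2 (fib (2 * j.+1).+2)%:R
    <= ln 2 / ln golden_ratio + ln 2 / ln golden_ratio / 2 * j.+1%:R^-1 :> R.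
Proof.
set m := (2 * j.+1)%N; set c := ln 2 / ln golden_ratio.
have phi_gt0 := lt_trans ltr01 golden_ratio_gt1.
have ln2_gt0 : 0 < ln (2 : R) by rewrite ln_gt0 ?ltr1n.
have ln_phi_gt0 : 0 < ln (golden_ratio : R) by rewrite ln_gt0 ?golden_ratio_gt1.
have log2_phi_gt0 : 0 < log2 (golden_ratio : R) by exact: divr_gt0.
have log2_alpha : log2 (alpha (fib m.+2))%:R <= m.+1%:R :> R.
  have /andP[alpha_gt0 alpha_le] := alpha_fib_le j.+1.
  have -> : m.+1%:R = log2 (2 ^+ m.+1 : R) by rewrite log2_exprn // log2_2 mulr1.
  by apply: ler_log2; rewrite ?ltr0n // -natrX ler_nat.
have log2_fib : m%:R * log2 golden_ratio <= log2 (fib m.+2)%:R :> R.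
  by rewrite -log2_exprn //; apply: ler_log2; rewrite ?exprn_gt0 ?golden_ratio_le_fib.
rewrite ler_pdivrMr; last first.
  by apply: lt_le_trans log2_fib; rewrite mulr_gt0 ?ltr0n.
apply: (le_trans log2_alpha).
have -> : m.+1%:R = (c + c / 2 * j.+1%:R^-1) * (m%:R * log2 golden_ratio) :> R.
  by rewrite /c /log2 -natr1 natrM; field; rewrite nat1r !gt_eqF.
by apply: ler_wpM2l log2_fib; rewrite addr_ge0 ?divr_ge0 ?ltW.
Qed.

End RealBounds.

Theorem theorem1p1 (R : realType) (a : R) :
  (fun n : nat => log2 ((alpha n)%:R : R) / log2 (n%:R : R)) @ \oo --> a ->
  a <= ln 2 / ln golden_ratio.
Proof.
move=> ratio_a; apply: (cvg_le_subseq ratio_a (n := fun j => fib (2 * j.+1).+2)).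
  apply/cvgnyPge => N; apply: filterS (nbhs_infty_ge N) => j le_N_j.
  by apply: leq_trans (leq_fib _); lia.
exact: ratio_fib_le.
Qed.
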